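(* Let $(X,\varphi)$ be a Smale space and $R\subset X$ a closed rectangle. Then the maps from $(R,d)$ to $(\mathcal K(R),d_H)$ given by $x\mapsto X^s(x,R)$ and $x\mapsto X^u(x,R)$ are continuous. In particular, the maps $R\ni x\mapsto\operatorname{diam}(X^s(x,R))$ and $R\ni x\mapsto\operatorname{diam}(X^u(x,R))$ are continuous.
   Context: A Smale space $(X,\varphi)$: compact metric space $(X,d)$, homeomorphism $\varphi$, constants $\varepsilon_X>0,\lambda_X>1$ and a continuous bracket $[\cdot,\cdot]$ on $\{(x,y):d(x,y)\le\varepsilon_X\}$ with $[x,x]=x$, $[x,[y,z]]=[x,z]$, $[[x,y],z]=[x,z]$, $\varphi([x,y])=[\varphi(x),\varphi(y)]$ (whenever defined), such that $\varphi$ contracts distances by $\lambda_X^{-1}$ on local stable sets $X^s(x,\varepsilon)=\{y:d(x,y)<\varepsilon,[x,y]=y\}$ and $\varphi^{-1}$ contracts by $\lambda_X^{-1}$ on local unstable sets $X^u(x,\varepsilon)=\{y:d(x,y)<\varepsilon,[y,x]=y\}$, $0<\varepsilon\le\varepsilon_X$. Fix $\varepsilon_X'\in(0,\varepsilon_X/2]$ such that $d(x,y)\le\varepsilon_X'$ implies $d(x,[x,y]),d(y,[x,y])<\varepsilon_X/2$. A rectangle is a nonempty $R\subset X$ with $\operatorname{diam}R\le\varepsilon_X'$ and $[x,y]\in R$ for all $x,y\in R$; for $x\in R$, $X^s(x,R)=X^s(x,2\varepsilon_X')\cap R$ and $X^u(x,R)=X^u(x,2\varepsilon_X')\cap R$.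 $\mathcal K(R)$ is the set of compact subsets of $R$ and $d_H$ the Hausdorff metric on it. *)

From Stdlib Require Import Reals Lra List Classical.
From Coquelicot Require Import Coquelicot.
Open Scope R_scope.

(** A Smale space (X, phi) on a carrier type X, with metric d, homeomorphism phi
    (inverse phi_inv), constants eps_X > 0, lam_X > 1 and bracket [x,y] = br x y,
    which is only meaningful on {(x,y) | d x y <= eps_X} (outside it, its value is
    irrelevant: all axioms are stated only where the bracket is defined). *)
Record SmaleSpace (X : Type) := {
  d : X -> X -> R;
  phi : X -> X;
  phi_inv : X -> X;
  epsX : R;
  lamX : R;
  br : X -> X -> X;
  d_nonneg : forall x y, 0 <= d x y;
  d_eq0 : forall x y, d x y = 0 <-> x = y;
  d_sym : forall x y, d x y = d y x;
  d_tri : forall x y z, d x z <= d x y + d y z;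
  X_compact : forall (I : Type) (U : I -> X -> Prop),
      (forall i x, U i x -> exists e, 0 < e /\ forall y, d x y < e -> U i y) ->
      (forall x, exists i, U i x) ->
      exists l : list I, forall x, exists i, In i l /\ U i x;
  phi_invK : forall x, phi_inv (phi x) = x;
  phiK : forall x, phi (phi_inv x) = x;
  phi_cont : forall x e, 0 < e -> exists del, 0 < del /\
      forall y, d x y < del -> d (phi x) (phi y) < e;
  phi_inv_cont : forall x e, 0 < e -> exists del, 0 < del /\
      forall y, d x y < del -> d (phi_inv x) (phi_inv y) < e;
  epsX_pos : 0 < epsX;
  lamX_gt1 : 1 < lamX;
  br_cont : forall x y, d x y <= epsX -> forall e, 0 < e -> exists del, 0 < del /\
      forall x' y', d x' y' <= epsX -> d x x' < del -> d y y' < del ->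
      d (br x y) (br x' y') < e;
  br_xx : forall x, br x x = x;
  br_l : forall x y z, d y z <= epsX -> d x (br y z) <= epsX -> d x z <= epsX ->
      br x (br y z) = br x z;
  br_r : forall x y z, d x y <= epsX -> d (br x y) z <= epsX -> d x z <= epsX ->
      br (br x y) z = br x z;
  br_phi : forall x y, d x y <= epsX -> d (phi x) (phi y) <= epsX ->
      phi (br x y) = br (phi x) (phi y);
  contr_s : forall x e y z, 0 < e -> e <= epsX ->
      (d x y < e /\ br x y = y) -> (d x z < e /\ br x z = z) ->
      d (phi y) (phi z) <= / lamX * d y z;
  contr_u : forall x e y z, 0 < e -> e <= epsX ->
      (d x y < e /\ br y x = y) -> (d x z < e /\ br z x = z) ->
      d (phi_inv y) (phi_inv z) <= / lamX * d y z
}.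

Arguments d {X} s x y.
Arguments phi {X} s x.
Arguments phi_inv {X} s x.
Arguments epsX {X} s.
Arguments lamX {X} s.
Arguments br {X} s x y.

Section Defs.
Context {X : Type} (S : SmaleSpace X).

Definition Xs (x : X) (e : R) : X -> Prop := fun y => d S x y < e /\ br S x y = y.
Definition Xu (x : X) (e : R) : X -> Prop := fun y => d S x y < e /\ br S y x = y.

Definition admissible_eps' (e' : R) : Prop :=
  0 < e' /\ e' <= epsX S / 2 /\
  forall x y, d S x y <= e' -> d S x (br S x y) < epsX S / 2 /\ d S y (br S x y) < epsX S / 2.

Definition rectangle (e' : R) (Rs : X -> Prop) : Prop :=
  (exists x, Rs x) /\
  (forall x y, Rs x -> Rs y -> d S x y <= e') /\
  (forall x y, Rs x -> Rs y -> Rs (br S x y)).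

Definition is_open (U : X -> Prop) : Prop :=
  forall x, U x -> exists e, 0 < e /\ forall y, d S x y < e -> U y.

Definition is_closed (A : X -> Prop) : Prop := is_open (fun x => ~ A x).

Definition is_compact (K : X -> Prop) : Prop :=
  forall (I : Type) (U : I -> X -> Prop),
    (forall i, is_open (U i)) ->
    (forall x, K x -> exists i, U i x) ->
    exists l : list I, forall x, K x -> exists i, In i l /\ U i x.

Definition XsR (e' : R) (Rs : X -> Prop) (x : X) : X -> Prop :=
  fun y => Xs x (2 * e') y /\ Rs y.
Definition XuR (e' : R) (Rs : X -> Prop) (x : X) : X -> Prop :=
  fun y => Xu x (2 * e') y /\ Rs y.

(** Distance from a point to a set, excess, Hausdorff distance, diameter
    (all finite for nonempty compact sets). *)
Definition dist_set (a : X) (B : X -> Prop) : R :=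
  real (Glb_Rbar (fun r => exists b, B b /\ r = d S a b)).
Definition excess (A B : X -> Prop) : R :=
  real (Lub_Rbar (fun r => exists a, A a /\ r = dist_set a B)).
Definition hausdorff (A B : X -> Prop) : R := Rmax (excess A B) (excess B A).
Definition diam (A : X -> Prop) : R :=
  real (Lub_Rbar (fun r => exists a b, A a /\ A b /\ r = d S a b)).

Definition cont_on_H (Rs : X -> Prop) (F : X -> X -> Prop) : Prop :=
  forall x, Rs x -> forall e, 0 < e -> exists del, 0 < del /\
    forall y, Rs y -> d S x y < del -> hausdorff (F x) (F y) < e.
Definition cont_on_R (Rs : X -> Prop) (f : X -> R) : Prop :=
  forall x, Rs x -> forall e, 0 < e -> exists del, 0 < del /\
    forall y, Rs y -> d S x y < del -> Rabs (f x - f y) < e.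

End Defs.

(** On a rectangle [R], [z |-> [x, z]] retracts [R] onto [X^s(x, R)] and
    [z |-> [z, x]] retracts it onto [X^u(x, R)]; the slices are closed because
    the bracket is continuous, hence compact. Since [R] is compact and the
    bracket jointly continuous, [[x, z]] and [[x', z]] are uniformly close in
    [z] when [x'] is close to [x]. As [a = [x, a]] on [X^s(x, R)], the point
    [[x', a]] of [X^s(x', R)] is then close to [a], and symmetrically, so both
    the Hausdorff distance and the difference of the diameters of the two
    slices are small. *)
From Stdlib Require Import Reals Lra List Classical.
From Coquelicot Require Import Coquelicot.
Open Scope R_scope.

Lemma real_Lub_Rbar_le (E : R -> Prop) (M : R) :
  0 <= M -> (forall r, E r -> r <= M) -> real (Lub_Rbar E) <= M.
Proof.
  intros HM Hub. destruct (Lub_Rbar_correct E) as [_ Hlub].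
  assert (Hle : Rbar_le (Lub_Rbar E) M) by (apply Hlub; exact Hub).
  revert Hle. case (Lub_Rbar E); simpl; tauto.
Qed.

Lemma real_Lub_Rbar_ge (E : R -> Prop) (M r : R) :
  (forall s, E s -> s <= M) -> E r -> r <= real (Lub_Rbar E).
Proof.
  intros Hub Er. destruct (Lub_Rbar_correct E) as [Hub' Hlub].
  assert (Hge : Rbar_le r (Lub_Rbar E)) by (apply Hub'; exact Er).
  assert (Hle : Rbar_le (Lub_Rbar E) M) by (apply Hlub; exact Hub).
  revert Hge Hle. case (Lub_Rbar E); simpl; tauto.
Qed.

Lemma real_Glb_Rbar_le (E : R -> Prop) (r : R) :
  (forall s, E s -> 0 <= s) -> E r -> real (Glb_Rbar E) <= r.
Proof.
  intros Hlb Er. destruct (Glb_Rbar_correct E) as [Hlb' Hglb].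
  assert (Hle : Rbar_le (Glb_Rbar E) r) by (apply Hlb'; exact Er).
  assert (Hge : Rbar_le 0 (Glb_Rbar E)) by (apply Hglb; exact Hlb).
  revert Hle Hge. case (Glb_Rbar E); simpl; tauto.
Qed.

Lemma posreal_lower_bound {I : Type} (f : I -> posreal) (l : list I) :
  exists del : posreal, forall i, In i l -> del <= f i.
Proof.
  induction l as [| i l [del Hdel]].
  - exists (mkposreal 1 Rlt_0_1). intros i [].
  - exists (mkposreal (Rmin del (f i)) (Rmin_stable_in_posreal del (f i))).
    intros j [<- | Hj]; simpl.
    + apply Rmin_r.
    + eapply Rle_trans; [apply Rmin_l | exact (Hdel j Hj)].
Qed.

Section MetricFacts.

Context {X : Type} (S : SmaleSpace X).

Lemma d_refl (x : X) : d S x x = 0.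
Proof. apply (d_eq0 X S). reflexivity. Qed.

Lemma is_open_union (U V : X -> Prop) :
  is_open S U -> is_open S V -> is_open S (fun x => U x \/ V x).
Proof.
  intros HU HV x [Ux | Vx].
  - destruct (HU x Ux) as [e [He Hball]]. exists e. split; [exact He|].
    intros y Hy. left. exact (Hball y Hy).
  - destruct (HV x Vx) as [e [He Hball]]. exists e. split; [exact He|].
    intros y Hy. right. exact (Hball y Hy).
Qed.

(* Adding the open complement of [K] to every member of a cover of [K] gives a
   cover of the compact space [X]. *)
Lemma is_compact_closed (K : X -> Prop) : is_closed S K -> is_compact S K.
Proof.
  intros HK I U HU Hcov.
  destruct (classic (exists x, K x)) as [[x0 Kx0] | Hempty].
  2: { exists nil. intros x Kx. exfalso. exact (Hempty (ex_intro _ x Kx)). }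
  destruct (Hcov x0 Kx0) as [i0 _].
  destruct (X_compact X S I (fun i x => U i x \/ ~ K x)) as [l Hl].
  - intros i. exact (is_open_union (U i) (fun x => ~ K x) (HU i) HK).
  - intros x. destruct (classic (K x)) as [Kx | nKx].
    + destruct (Hcov x Kx) as [i Hi]. exists i. left. exact Hi.
    + exists i0. right. exact nKx.
  - exists l. intros x Kx. destruct (Hl x) as [i [Hin [Hi | nKx]]].
    + exists i. split; assumption.
    + contradiction.
Qed.

Lemma dist_set_le (a : X) (B : X -> Prop) (b : X) :
  B b -> dist_set S a B <= d S a b.
Proof.
  intros Bb. apply real_Glb_Rbar_le.
  - intros s [c [_ ->]]. apply d_nonneg.
  - exists b. split; [exact Bb | reflexivity].
Qed.

Lemma excess_le (A B : X -> Prop) (r : R) : 0 <= r ->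
  (forall a, A a -> exists b, B b /\ d S a b <= r) -> excess S A B <= r.
Proof.
  intros Hr Hnear. apply real_Lub_Rbar_le; [exact Hr|].
  intros s [a [Aa ->]]. destruct (Hnear a Aa) as [b [Bb Hab]].
  eapply Rle_trans; [apply (dist_set_le a B b Bb) | exact Hab].
Qed.

Lemma hausdorff_le (A B : X -> Prop) (r : R) : 0 <= r ->
  (forall a, A a -> exists b, B b /\ d S a b <= r) ->
  (forall b, B b -> exists a, A a /\ d S b a <= r) ->
  hausdorff S A B <= r.
Proof.
  intros Hr HAB HBA. apply Rmax_lub; apply excess_le; assumption.
Qed.

Lemma diam_ge (A : X -> Prop) (M : R) (a c : X) :
  (forall a' c', A a' -> A c' -> d S a' c' <= M) -> A a -> A c ->
  d S a c <= diam S A.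
Proof.
  intros HM Aa Ac. apply (real_Lub_Rbar_ge _ M).
  - intros s [a' [c' [Aa' [Ac' ->]]]]. exact (HM a' c' Aa' Ac').
  - exists a, c. auto.
Qed.

Lemma diam_le_shift (A B : X -> Prop) (M r : R) (a0 : X) : A a0 ->
  (forall a, A a -> exists b, B b /\ d S a b <= r) ->
  (forall b c, B b -> B c -> d S b c <= M) ->
  diam S A <= diam S B + 2 * r.
Proof.
  intros Aa0 Hnear HM.
  destruct (Hnear a0 Aa0) as [b0 [Bb0 Hb0]].
  assert (Hr : 0 <= r) by (pose proof (d_nonneg X S a0 b0); lra).
  assert (HB : 0 <= diam S B) by (rewrite <- (d_refl b0); exact (diam_ge B M b0 b0 HM Bb0 Bb0)).
  apply real_Lub_Rbar_le; [lra|].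
  intros s [a [c [Aa [Ac ->]]]].
  destruct (Hnear a Aa) as [a' [Ba' Ha']]. destruct (Hnear c Ac) as [c' [Bc' Hc']].
  pose proof (diam_ge B M a' c' HM Ba' Bc').
  pose proof (d_tri X S a a' c). pose proof (d_tri X S a' c' c).
  pose proof (d_sym X S c' c). lra.
Qed.

End MetricFacts.

Section Slices.

Context {X : Type} (S : SmaleSpace X).

(* [b x] plays the role of [[x, .]] (stable case) or [[., x]] (unstable case);
   [r] is the radius [2 eps'] of the local sets. *)
Record retraction_family (Rs : X -> Prop) (r : R) (b : X -> X -> X) : Prop := {
  rf_small : forall x y, Rs x -> Rs y -> d S x y < r;
  rf_closed : is_closed S Rs;
  rf_cont : forall x y, Rs x -> Rs y -> forall e, 0 < e -> exists del, 0 < del /\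
    forall x' y', Rs x' -> Rs y' -> d S x x' < del -> d S y y' < del ->
    d S (b x y) (b x' y') < e;
  rf_in : forall x z, Rs x -> Rs z -> Rs (b x z);
  rf_idem : forall x z, Rs x -> Rs z -> b x (b x z) = b x z
}.

Arguments rf_small {Rs r b}.
Arguments rf_closed {Rs r b}.
Arguments rf_cont {Rs r b}.
Arguments rf_in {Rs r b}.
Arguments rf_idem {Rs r b}.

Definition slice (Rs : X -> Prop) (r : R) (b : X -> X -> X) (x : X) : X -> Prop :=
  fun y => (d S x y < r /\ b x y = y) /\ Rs y.

Context {Rs : X -> Prop} {r : R} {b : X -> X -> X} (Hb : retraction_family Rs r b).

Lemma retract_in_slice (x z : X) : Rs x -> Rs z -> slice Rs r b x (b x z).
Proof.
  intros Rx Rz. pose proof (rf_in Hb x z Rx Rz) as Rbxz.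
  split; [split|].
  - exact (rf_small Hb x (b x z) Rx Rbxz).
  - exact (rf_idem Hb x z Rx Rz).
  - exact Rbxz.
Qed.

Lemma slice_bounded (x a c : X) :
  slice Rs r b x a -> slice Rs r b x c -> d S a c <= r.
Proof. intros [_ Ra] [_ Rc]. left. exact (rf_small Hb a c Ra Rc). Qed.

Lemma slice_closed (x : X) : Rs x -> is_closed S (slice Rs r b x).
Proof.
  intros Rx y Hy. destruct (classic (Rs y)) as [Ry | nRy].
  2: { destruct (rf_closed Hb y nRy) as [e [He Hball]].
       exists e. split; [exact He|]. intros y' Hy' [_ Ry']. exact (Hball y' Hy' Ry'). }
  assert (Hmoved : b x y <> y).
  { intros Hfix. apply Hy. split; [split|]; auto. exact (rf_small Hb x y Rx Ry). }
  set (eta := d S (b x y) y).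
  assert (Heta : 0 < eta).
  { assert (eta <> 0) by (intros H0; apply Hmoved, (d_eq0 X S), H0).
    pose proof (d_nonneg X S (b x y) y). unfold eta in *. lra. }
  destruct (rf_cont Hb x y Rx Ry (eta / 2)) as [del [Hdel Hc]]; [lra|].
  exists (Rmin del (eta / 2)). split; [apply Rmin_pos; lra|].
  intros y' Hyy' [[_ Hfix'] Ry'].
  pose proof (Rmin_l del (eta / 2)). pose proof (Rmin_r del (eta / 2)).
  assert (Hbx : d S (b x y) y' < eta / 2).
  { rewrite <- Hfix'. apply Hc; [exact Rx | exact Ry' | rewrite d_refl; exact Hdel | lra]. }
  pose proof (d_tri X S (b x y) y' y). pose proof (d_sym X S y' y).
  unfold eta in *. lra.
Qed.

(* Cover the compact set [Rs] by balls [B(w, del_w)], with [del_w] a modulus of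
   continuity of [b] at [(x, w)], and take the least [del_w] of a finite subcover. *)
Lemma retraction_uniform (x : X) : Rs x -> forall e, 0 < e -> exists del, 0 < del /\
  forall y z, Rs y -> Rs z -> d S x y < del -> d S (b x z) (b y z) < e.
Proof.
  intros Rx e He.
  pose (modulus (p : X * posreal) := Rs (fst p) /\ forall x' y', Rs x' -> Rs y' ->
    d S x x' < snd p -> d S (fst p) y' < snd p -> d S (b x (fst p)) (b x' y') < e / 2).
  pose (U (p : X * posreal) z := modulus p /\ d S (fst p) z < snd p).
  assert (HU : forall p, is_open S (U p)).
  { intros p z [Hp Hz]. exists (snd p - d S (fst p) z). split; [lra|].
    intros z' Hz'. split; [exact Hp|]. pose proof (d_tri X S (fst p) z z'). lra. }
  assert (Hcov : forall z, Rs z -> exists p, U p z).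
  { intros z Rz. destruct (rf_cont Hb x z Rx Rz (e / 2)) as [del [Hdel Hc]]; [lra|].
    exists (z, mkposreal del Hdel). split; [split; [exact Rz | exact Hc]|].
    simpl. rewrite d_refl. exact Hdel. }
  destruct (is_compact_closed S Rs (rf_closed Hb) _ U HU Hcov) as [l Hl].
  destruct (posreal_lower_bound snd l) as [del Hdel].
  exists del. split; [apply cond_pos|]. intros y z Ry Rz Hxy.
  destruct (Hl z Rz) as [[w dw] [Hin [[Rw Hcont] Hwz]]]. simpl in *.
  pose proof (Hdel (w, dw) Hin) as Hdw. simpl in Hdw.
  assert (Hyz : d S (b x w) (b y z) < e / 2) by (apply Hcont; auto; lra).
  assert (Hxz : d S (b x w) (b x z) < e / 2) by (apply Hcont; auto; rewrite d_refl; apply cond_pos).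
  pose proof (d_tri X S (b x z) (b x w) (b y z)). pose proof (d_sym X S (b x z) (b x w)).
  lra.
Qed.

Lemma slice_near (x y : X) (eps : R) : Rs y ->
  (forall z, Rs z -> d S (b x z) (b y z) <= eps) ->
  forall a, slice Rs r b x a -> exists a', slice Rs r b y a' /\ d S a a' <= eps.
Proof.
  intros Ry Hclose a [[_ Hfix] Ra]. exists (b y a). split.
  - exact (retract_in_slice y a Ry Ra).
  - rewrite <- Hfix at 1. exact (Hclose a Ra).
Qed.

Lemma retraction_uniform_le (x : X) : Rs x -> forall e, 0 < e -> exists del, 0 < del /\
  forall y, Rs y -> d S x y < del ->
  (forall z, Rs z -> d S (b x z) (b y z) <= e) /\
  (forall z, Rs z -> d S (b y z) (b x z) <= e).
Proof.
  intros Rx e He. destruct (retraction_uniform x Rx e He) as [del [Hdel Hunif]].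
  exists del. split; [exact Hdel|]. intros y Ry Hxy.
  split; intros z Rz; [|rewrite d_sym]; left; exact (Hunif y z Ry Rz Hxy).
Qed.

Lemma slice_cont_H : cont_on_H S Rs (slice Rs r b).
Proof.
  intros x Rx e He.
  destruct (retraction_uniform_le x Rx (e / 2)) as [del [Hdel Hunif]]; [lra|].
  exists del. split; [exact Hdel|]. intros y Ry Hxy.
  destruct (Hunif y Ry Hxy) as [Hxy' Hyx'].
  apply Rle_lt_trans with (e / 2); [|lra].
  apply hausdorff_le; [lra | exact (slice_near x y _ Ry Hxy') | exact (slice_near y x _ Rx Hyx')].
Qed.

Lemma slice_diam_cont : cont_on_R S Rs (fun x => diam S (slice Rs r b x)).
Proof.
  intros x Rx e He.
  destruct (retraction_uniform_le x Rx (e / 4)) as [del [Hdel Hunif]]; [lra|].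
  exists del. split; [exact Hdel|]. intros y Ry Hxy.
  destruct (Hunif y Ry Hxy) as [Hxy' Hyx'].
  pose proof (diam_le_shift S _ _ r _ _ (retract_in_slice x x Rx Rx)
    (slice_near x y _ Ry Hxy') (slice_bounded y)).
  pose proof (diam_le_shift S _ _ r _ _ (retract_in_slice y y Ry Ry)
    (slice_near y x _ Rx Hyx') (slice_bounded x)).
  apply Rabs_def1; lra.
Qed.

End Slices.

Section RectangleBracket.

Context {X : Type} (S : SmaleSpace X) (e' : R) (Rs : X -> Prop).
Hypotheses (He' : admissible_eps' S e') (HR : rectangle S e' Rs) (HRc : is_closed S Rs).

Lemma rectangle_small (x y : X) : Rs x -> Rs y -> d S x y < 2 * e'.
Proof.
  intros Rx Ry. destruct He' as [He'pos _]. destruct HR as [_ [Hdiam _]].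
  pose proof (Hdiam x y Rx Ry). lra.
Qed.

Lemma rectangle_d_le_epsX (x y : X) : Rs x -> Rs y -> d S x y <= epsX S.
Proof.
  intros Rx Ry. destruct He' as [He'pos [He'eps _]]. destruct HR as [_ [Hdiam _]].
  pose proof (Hdiam x y Rx Ry). lra.
Qed.

Lemma rectangle_stable_retraction : retraction_family S Rs (2 * e') (br S).
Proof.
  destruct HR as [_ [_ Hbr]]. constructor.
  - exact rectangle_small.
  - exact HRc.
  - intros x y Rx Ry e He.
    destruct (br_cont X S x y (rectangle_d_le_epsX x y Rx Ry) e He) as [del [Hdel Hc]].
    exists del. split; [exact Hdel|]. intros x' y' Rx' Ry'.
    apply Hc, rectangle_d_le_epsX; assumption.
  - exact Hbr.
  - intros x z Rx Rz. apply br_l; apply rectangle_d_le_epsX; auto.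
Qed.

Lemma rectangle_unstable_retraction :
  retraction_family S Rs (2 * e') (fun x y => br S y x).
Proof.
  destruct HR as [_ [_ Hbr]]. constructor.
  - exact rectangle_small.
  - exact HRc.
  - intros x y Rx Ry e He.
    destruct (br_cont X S y x (rectangle_d_le_epsX y x Ry Rx) e He) as [del [Hdel Hc]].
    exists del. split; [exact Hdel|]. intros x' y' Rx' Ry' Hxx' Hyy'.
    apply Hc; [apply rectangle_d_le_epsX | |]; assumption.
  - intros x z Rx Rz. exact (Hbr z x Rz Rx).
  - intros x z Rx Rz. apply br_r; apply rectangle_d_le_epsX; auto.
Qed.

End RectangleBracket.

Theorem lemma6p14 (X : Type) (S : SmaleSpace X) (e' : R) (Rs : X -> Prop) :
  admissible_eps' S e' ->
  rectangle S e' Rs ->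
  is_closed S Rs ->
  (* the maps land in K(R) *)
  (forall x, Rs x ->
     is_compact S (XsR S e' Rs x) /\ (forall y, XsR S e' Rs x y -> Rs y) /\
     is_compact S (XuR S e' Rs x) /\ (forall y, XuR S e' Rs x y -> Rs y)) /\
  (* continuity into (K(R), d_H) *)
  cont_on_H S Rs (XsR S e' Rs) /\
  cont_on_H S Rs (XuR S e' Rs) /\
  (* continuity of the diameters *)
  cont_on_R S Rs (fun x => diam S (XsR S e' Rs x)) /\
  cont_on_R S Rs (fun x => diam S (XuR S e' Rs x)).
Proof.
  intros He' HR HRc.
  pose proof (rectangle_stable_retraction S e' Rs He' HR HRc) as Hs.
  pose proof (rectangle_unstable_retraction S e' Rs He' HR HRc) as Hu.
  split; [|split; [|split; [|split]]].
  - intros x Rx. split; [|split; [|split]].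
    + exact (is_compact_closed S _ (slice_closed S Hs x Rx)).
    + intros y Hy. exact (proj2 Hy).
    + exact (is_compact_closed S _ (slice_closed S Hu x Rx)).
    + intros y Hy. exact (proj2 Hy).
  - exact (slice_cont_H S Hs).
  - exact (slice_cont_H S Hu).
  - exact (slice_diam_cont S Hs).
  - exact (slice_diam_cont S Hu).
Qed.
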